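(* Let a partial coloring of an $n\times n$ square with colors from $\{1,\dots,2n-2\}$ uniquely extend to $L(n,2n-2)$, and let $a,b,c$ be colors. Then there are no indices $k,l$ such that either (i) $(k+1,l+1)$, $(k+1,l+2)$, $(k+2,l+2)$, $(k+2,l+3)$ are all uncolored and $a(k+1,l+1)=\{a\}$, $a(k+1,l+2)=\{a,b\}$, $a(k+2,l+2)=\{b,c\}$; or (ii) $(k+3,l+2)$, $(k+2,l+2)$, $(k+2,l+1)$, $(k+1,l+1)$ are all uncolored and $a(k+3,l+2)=\{a\}$, $a(k+2,l+2)=\{a,b\}$, $a(k+2,l+1)=\{b,c\}$.
   Context: For positive integers $n,k$, let $\mathcal{L}_{n,k}$ be the set of $n\times n$ squares all of whose entries are colored with colors from a fixed set of $k$ colors $\{1,\dots,k\}$ such that any two entries in the same row, or in the same column, have different colors. Entries are indexed $(i,j)$, $i$ the row and $j$ the column. A partial coloring of an $n\times n$ square assigns colors from $\{1,\dots,k\}$ to some of its entries; the remaining entries are called uncolored. A partial coloring extends to $L(n,k)$ if the uncolored entries can be colored so that the resulting fully colored square lies in $\mathcal{L}_{n,k}$ (keeping the given colors), and it uniquely extends to $L(n,k)$ if there is exactly one such way. For an uncolored entry $(i,j)$ in a partial coloring with $k$ colors, $a(i,j)$ (the set of available colors) is the set of colors in $\{1,\dots,k\}$ that are not the color of any colored entry in row $i$ or column $j$. *)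

(* Rows, columns are 'I_n (0-based), colors are 'I_k
   (color c+1 of the paper is ordinal c). *)
From mathcomp Require Import all_boot.
Set Implicit Arguments. Unset Strict Implicit. Unset Printing Implicit Defensive.

(* A partial coloring: None = uncolored. *)
Definition pcoloring (n k : nat) := 'I_n -> 'I_n -> option 'I_k.
Definition coloring (n k : nat) := 'I_n -> 'I_n -> 'I_k.

Definition in_L (n k : nat) (L : coloring n k) : Prop :=
  (forall i j j', L i j = L i j' -> j = j') /\
  (forall i i' j, L i j = L i' j -> i = i').

Definition extends_to (n k : nat) (P : pcoloring n k) (L : coloring n k) : Prop :=
  forall i j c, P i j = Some c -> L i j = c.

Definition extends (n k : nat) (P : pcoloring n k) : Prop :=
  exists L : coloring n k, in_L L /\ extends_to P L.

(* Exactly one extension (two colorings are the same iff they agree on all entries). *)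
Definition uniquely_extends (n k : nat) (P : pcoloring n k) : Prop :=
  exists L : coloring n k, (in_L L /\ extends_to P L) /\
    forall L' : coloring n k, in_L L' -> extends_to P L' -> forall i j, L' i j = L i j.

Definition avail (n k : nat) (P : pcoloring n k) (i j : 'I_n) : {set 'I_k} :=
  [set c | [forall j' : 'I_n, P i j' != Some c] && [forall i' : 'I_n, P i' j != Some c]].

(* The configuration is impossible for every partial coloring with 2n-2 colors,
   by counting alone. A line with u uncolored entries uses at most n - u colors,
   and |a(i,j)| = 2n-2 - |row colors ∪ column colors|. At (k+1,l+1) this forces the
   row and column colors to be disjoint and column l+1 to have no other uncolored
   entry; at (k+2,l+2) it forces disjointness again and row k+2 to have at most two
   uncolored entries. Hence (k+2,l+1) carries a color x, which lies in column l+1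
   and row k+2 but, by the two disjointness facts, neither in row k+1 nor in
   column l+2; so x is available at (k+1,l+2) and x <> a, i.e. x = b. But b is
   available at (k+2,l+2), so b is not in row k+2. Case (ii) is case (i) for the
   transposed square. *)

From mathcomp Require Import all_boot.
From mathcomp Require Import zify.

Set Implicit Arguments. Unset Strict Implicit. Unset Printing Implicit Defensive.

Section UsedColors.
Variables (I T : finType).

Definition used_colors (f : I -> option T) : {set T} :=
  [set c | [exists i, f i == Some c]].

Lemma card_used_colors (f : I -> option T) :
  #|used_colors f| <= #|[set i | f i != None]|.
Proof.
rewrite -(card_imset _ (@Some_inj _)).
apply: leq_trans (leq_imset_card f _); apply: subset_leq_card.
apply/subsetP => y /imsetP[c]; rewrite inE => /existsP[i /eqP fi] ->.
by apply/imsetP; exists i; rewrite ?inE fi.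
Qed.

Lemma card_used_colors_uncolored (f : I -> option T) (D : {set I}) :
  {in D, forall i, f i = None} -> #|used_colors f| + #|D| <= #|I|.
Proof.
move=> fD; rewrite -(cardsC D) addnC leq_add2l.
apply: leq_trans (card_used_colors f) (subset_leq_card _).
by apply/subsetP => i; rewrite !inE; apply: contra => /fD ->.
Qed.

End UsedColors.

Section Avail.
Variables (n k : nat) (P : pcoloring n k).

Definition row_colors (i : 'I_n) : {set 'I_k} := used_colors (P i).
Definition col_colors (j : 'I_n) : {set 'I_k} := used_colors (P^~ j).

Lemma avail_row_col i j : avail P i j = ~: (row_colors i :|: col_colors j).
Proof. by apply/setP => c; rewrite !inE negb_or !negb_exists. Qed.

Lemma mem_avail i j c :
  (c \in avail P i j) = (c \notin row_colors i) && (c \notin col_colors j).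
Proof. by rewrite avail_row_col !inE negb_or. Qed.

Lemma card_avail_ge i j :
  k <= #|row_colors i| + #|col_colors j| + #|avail P i j|.
Proof.
have := cardsUI (row_colors i) (col_colors j).
have := cardsC (row_colors i :|: col_colors j).
by rewrite avail_row_col card_ord; lia.
Qed.

Lemma disjoint_row_col_colors i j :
  #|row_colors i| + #|col_colors j| + #|avail P i j| <= k ->
  row_colors i :&: col_colors j = set0.
Proof.
have := cardsUI (row_colors i) (col_colors j).
have := cardsC (row_colors i :|: col_colors j).
rewrite avail_row_col card_ord => hC hUI hk.
by apply/eqP; rewrite -cards_eq0; lia.
Qed.

Lemma card_row_colors i (D : {set 'I_n}) :
  {in D, forall j, P i j = None} -> #|row_colors i| + #|D| <= n.
Proof. by move/card_used_colors_uncolored; rewrite card_ord. Qed.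

Lemma card_col_colors j (D : {set 'I_n}) :
  {in D, forall i, P i j = None} -> #|col_colors j| + #|D| <= n.
Proof. by move/card_used_colors_uncolored; rewrite card_ord. Qed.

End Avail.

Definition ptranspose n k (P : pcoloring n k) : pcoloring n k := fun i j => P j i.

Lemma avail_transpose n k (P : pcoloring n k) i j :
  avail (ptranspose P) i j = avail P j i.
Proof. by apply/setP => c; rewrite !inE andbC. Qed.

Lemma no_forced_staircase n (P : pcoloring n (2 * n - 2)) (a b c : 'I_(2 * n - 2))
    (r1 r2 c1 c2 c3 : 'I_n) :
  r1 != r2 -> c1 != c2 -> c2 != c3 -> c1 != c3 ->
  P r1 c1 = None -> P r1 c2 = None -> P r2 c2 = None -> P r2 c3 = None ->
  avail P r1 c1 = [set a] -> avail P r1 c2 = [set a; b] ->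
  avail P r2 c2 = [set b; c] -> False.
Proof.
move=> r12 c12 c23 c13 N11 N12 N22 N23 A11 A12 A22.
have hR1 : #|row_colors P r1| + #|[set c1; c2]| <= n.
  by apply: card_row_colors => j; rewrite !inE => /orP[]/eqP->.
have hC1 : #|col_colors P c1| + #|[set r1]| <= n.
  by apply: card_col_colors => i; rewrite inE => /eqP->.
have hC2 : #|col_colors P c2| + #|[set r1; r2]| <= n.
  by apply: card_col_colors => i; rewrite !inE => /orP[]/eqP->.
have hR2 : #|row_colors P r2| + #|[set c2; c3]| <= n.
  by apply: card_row_colors => j; rewrite !inE => /orP[]/eqP->.
rewrite cards1 !cards2 c12 r12 c23 in hR1 hC1 hC2 hR2.
have hA22 : #|avail P r2 c2| <= 2 by rewrite A22 cards2; case: (b != c).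
have dis1 : row_colors P r1 :&: col_colors P c1 = set0.
  by apply: disjoint_row_col_colors; rewrite A11 cards1; lia.
have dis2 : row_colors P r2 :&: col_colors P c2 = set0.
  by apply: disjoint_row_col_colors; lia.
have [x Px] : exists x, P r2 c1 = Some x.
  case E: (P r2 c1) => [x|]; first by exists x.
  have : #|row_colors P r2| + #|[set c1; c2; c3]| <= n.
    by apply: card_row_colors => j; rewrite !inE => /orP[/orP[]|]/eqP->.
  rewrite -setUA cardsU1 cards2 c23 !inE negb_or c12 c13.
  by have := card_avail_ge P r2 c2; lia.
have xR2 : x \in row_colors P r2 by rewrite inE; apply/existsP; exists c1; rewrite Px.
have xC1 : x \in col_colors P c1 by rewrite inE; apply/existsP; exists r2; rewrite Px.
have xR1 : x \notin row_colors P r1.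
  by apply/negP => xR1; move: (in_set0 x); rewrite -dis1 inE xR1 xC1.
have xC2 : x \notin col_colors P c2.
  by apply/negP => xC2; move: (in_set0 x); rewrite -dis2 inE xR2 xC2.
have xa : x != a.
  by apply/eqP => xa; move: (set11 a); rewrite -A11 mem_avail -xa xC1 andbF.
have : x \in avail P r1 c2 by rewrite mem_avail xR1.
rewrite A12 !inE (negbTE xa) /= => /eqP xb.
by have := set21 b c; rewrite -A22 mem_avail -xb xR2.
Qed.

Theorem lemma3 (n : nat) (P : pcoloring n (2 * n - 2)) (a b c : 'I_(2 * n - 2)) :
  uniquely_extends P ->
  (forall i1 i2 j1 j2 j3 : 'I_n,
      val i2 = (val i1).+1 -> val j2 = (val j1).+1 -> val j3 = (val j1).+2 ->
      ~ (P i1 j1 = None /\ P i1 j2 = None /\ P i2 j2 = None /\ P i2 j3 = None /\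
            avail P i1 j1 = [set a] /\ avail P i1 j2 = [set a; b] /\
          avail P i2 j2 = [set b; c])) /\
  (forall i1 i2 i3 j1 j2 : 'I_n,
      val i2 = (val i1).+1 -> val i3 = (val i1).+2 -> val j2 = (val j1).+1 ->
      ~ (P i3 j2 = None /\ P i2 j2 = None /\ P i2 j1 = None /\ P i1 j1 = None /\
            avail P i3 j2 = [set a] /\ avail P i2 j2 = [set a; b] /\
          avail P i2 j1 = [set b; c])).
Proof.
have neq_ord (x y : 'I_n) : val x != val y -> x != y by apply: contra => /eqP->.
move=> _; split=> [i1 i2 j1 j2 j3 e2 f2 f3 | i1 i2 i3 j1 j2 e2 e3 f2].
- move=> [N11 [N12 [N22 [N23 [A11 [A12 A22]]]]]].
  apply: (no_forced_staircase (r1 := i1) (r2 := i2) (c1 := j1) (c2 := j2) (c3 := j3)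
    _ _ _ _ N11 N12 N22 N23 A11 A12 A22);
    by apply: neq_ord; move: e2 f2 f3; clear; lia.
- move=> [N32 [N22 [N21 [N11 [A32 [A22 A21]]]]]].
  apply: (no_forced_staircase (P := ptranspose P) (a := a) (b := b) (c := c)
    (r1 := j2) (r2 := j1) (c1 := i3) (c2 := i2) (c3 := i1));
    rewrite ?(avail_transpose P) //; by apply: neq_ord; move: e2 e3 f2; clear; lia.
Qed.
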